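(* Let $d\ge2$, $n\ge1$, and $k\ge 2\lceil\frac{n}{2d-2}\rceil$. Then for every $\mathbf{y}\in\{-1,1\}^n$ and for Lebesgue-almost every $X\in\mathbb{R}^{d\times n}$, there exist $\tilde W\in\mathbb{R}^{2k\times d}$ and $\tilde v>0$ such that, with $\tilde{\mathbf{v}}=(\tilde v,\dots,\tilde v,-\tilde v,\dots,-\tilde v)\in\mathbb{R}^{2k}$ ($k$ entries $\tilde v$ followed by $k$ entries $-\tilde v$), one has $\mathbf{y}=\tilde{\mathbf{v}}^\top\sigma(\tilde WX)$.
   Context: $\sigma(z)=\max\{\alpha z,z\}$ with a fixed $0<\alpha<1$ (Leaky ReLU), applied entrywise; the columns of $X$ are the data points, so $\tilde{\mathbf{v}}^\top\sigma(\tilde WX)\in\mathbb{R}^{1\times n}$ is the vector of network outputs on the $n$ points. *)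

From mathcomp Require Import all_boot all_order all_algebra.
From mathcomp Require Import reals.
Set Implicit Arguments. Unset Strict Implicit. Unset Printing Implicit Defensive.
Import Order.TTheory GRing.Theory Num.Theory.
Local Open Scope ring_scope.

Definition leaky_relu (R : realType) (alpha : R) (z : R) : R := Num.max (alpha * z) z.

Definition sigma_mx (R : realType) (alpha : R) (m n : nat) (A : 'M[R]_(m, n)) : 'M[R]_(m, n) :=
  map_mx (leaky_relu alpha) A.

Definition ceildiv (a b : nat) : nat := ((a + b.-1) %/ b)%N.

Definition pm_vec (R : realType) (k : nat) (v : R) : 'rV[R]_(2 * k) :=
  \row_(i < 2 * k) (if (i < k)%N then v else - v).

Definition in_box (R : realType) (d n : nat) (a b X : 'M[R]_(d, n)) : Prop :=
  forall i j, a i j <= X i j /\ X i j <= b i j.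

Definition box_vol (R : realType) (d n : nat) (a b : 'M[R]_(d, n)) : R :=
  \prod_(i < d) \prod_(j < n) (b i j - a i j).

Definition lebesgue_null (R : realType) (d n : nat) (N : 'M[R]_(d, n) -> Prop) : Prop :=
  forall eps : R, 0 < eps ->
    exists a b : nat -> 'M[R]_(d, n),
      (forall m i j, a m i j <= b m i j) /\
      (forall X, N X -> exists m, in_box (a m) (b m) X) /\
      (forall M : nat, \sum_(m < M) box_vol (a m) (b m) <= eps).

From mathcomp Require Import all_boot all_order all_algebra.
From mathcomp Require Import reals boolp perm.
From mathcomp Require Import ring lra zify.
Import Order.TTheory GRing.Theory Num.Theory.
Local Open Scope ring_scope.
Set Implicit Arguments. Unset Strict Implicit. Unset Printing Implicit Defensive.

(* Call X generic when all its square minors are nonzero.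

   Non-generic matrices form a null set.  Expanding a minor along one entry
   x_e writes it as A X * x_e + B X, where A (a smaller minor) and B are
   locally Lipschitz and do not depend on x_e.  Where A = 0 we conclude by
   induction on the size of the minor; where |A| >= 1/rho the zero set is a
   Lipschitz graph over the other entries, which the boxes built on a grid
   of mesh 1/m cover with total volume O(1/m).

   Generic matrices are interpolated.  The ratios X_1j / X_0j are pairwise
   distinct; sorting the columns by ratio into k blocks of at most d columns,
   the rows w_g = tau_g e_0 - e_1 form a pencil of hyperplanes, w_g
   separating the blocks below g from the others.  A pair of neurons with
   rows t w_g + D_g and t w_g, t large, contributes c * D_g x_j with c = 1 or
   alpha according to the side of w_g on which x_j lies.  With
   D_g = P_(g+1) - P_g the output on block b telescopes to
   alpha' P_(b+1) x_j + alpha'' (P_k - P_(b+1)) x_j, and since any d columns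
   of X are independent, P_k and then each P_(b+1) can be chosen to fit the
   labels on block b. *)
Lemma ler_sum_uniq_sub (R : numDomainType) (T : eqType) (s t : seq T) (F : T -> R) :
  uniq s -> uniq t -> {subset s <= t} -> (forall x, 0 <= F x) ->
  \sum_(x <- s) F x <= \sum_(x <- t) F x.
Proof.
move=> us ut st F0; rewrite [leRHS](bigID (mem s)) /=.
have -> : \sum_(x <- t | x \in s) F x = \sum_(x <- s) F x.
  rewrite -big_filter; apply/perm_big/uniq_perm; rewrite ?filter_uniq //.
  by move=> x; rewrite mem_filter andb_idr //; apply: st.
by rewrite lerDl sumr_ge0.
Qed.

Lemma sum_uniq_inv_pow2_le1 (R : realFieldType) (s : seq nat) : uniq s ->
  \sum_(u <- s) ((2 : R) ^+ u.+1)^-1 <= 1.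
Proof.
move=> us; have geo M : \sum_(u <- iota 0 M) ((2 : R) ^+ u.+1)^-1 = 1 - (2 ^+ M)^-1.
  elim: M => [|M IH]; first by rewrite big_nil expr0 invr1 subrr.
  rewrite -addn1 iotaD big_cat /= big_seq1 IH add0n addn1 exprS invfM.
  by field; rewrite expf_neq0 ?pnatr_eq0.
pose M := (\sum_(u <- s) u).+1.
apply: (le_trans (ler_sum_uniq_sub _ (iota_uniq 0 M) _ _)) => //.
- by move=> u su; rewrite mem_iota add0n ltnS (big_rem u) //= leq_addr.
- by move=> u; rewrite invr_ge0 exprn_ge0.
by rewrite geo gerDl oppr_le0 invr_ge0 exprn_ge0.
Qed.

Section NullSets.
Variables (R : realType) (d n : nat).
Hypotheses (d_gt0 : (0 < d)%N) (n_gt0 : (0 < n)%N).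
Implicit Types (N : 'M[R]_(d, n) -> Prop) (a b : 'M[R]_(d, n)).

Lemma box_vol_ge0 a b : (forall i j, a i j <= b i j) -> 0 <= box_vol a b.
Proof.
by move=> ab; apply: prodr_ge0 => i _; apply: prodr_ge0 => j _; rewrite subr_ge0.
Qed.

Lemma box_vol_id a : box_vol a a = 0.
Proof.
rewrite /box_vol (bigD1 (Ordinal d_gt0)) //= (bigD1 (Ordinal n_gt0)) //=.
by rewrite subrr !mul0r.
Qed.

Definition box_cover (I : eqType) N eps (a b : I -> 'M[R]_(d, n)) :=
  [/\ forall m i j, a m i j <= b m i j,
      forall X, N X -> exists m, in_box (a m) (b m) X &
      forall s, uniq s -> \sum_(m <- s) box_vol (a m) (b m) <= eps].

Lemma lebesgue_null_uniq N eps : lebesgue_null N -> 0 < eps ->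
  exists a b : nat -> 'M[R]_(d, n), box_cover N eps a b.
Proof.
move=> Nnull eps_gt0; have [a [b [ab [cov vol]]]] := Nnull eps eps_gt0.
exists a, b; split=> // s us.
pose M := (\sum_(m <- s) m).+1.
apply: le_trans (vol M); rewrite -(big_mkord xpredT (fun m => box_vol (a m) (b m))).
apply: ler_sum_uniq_sub; rewrite ?iota_uniq //.
- by move=> m sm; rewrite mem_iota add0n ltnS (big_rem m) //= leq_addr.
- by move=> m; apply: box_vol_ge0.
Qed.

Lemma lebesgue_null_countable N :
  (forall eps, 0 < eps ->
    exists (I : countType) (a b : I -> 'M[R]_(d, n)), box_cover N eps a b) ->
  lebesgue_null N.
Proof.
move=> cover eps eps_gt0; have [I [a [b [ab cov vol]]]] := cover eps eps_gt0.
(* indices outside the range of [pickle] get the degenerate box at 0 *)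
pose a' m := oapp a 0 (pickle_inv m); pose b' m := oapp b 0 (pickle_inv m).
exists a', b'; split; first by move=> m i j; rewrite /a' /b'; case: pickle_inv => [x|] /=.
split=> [X /cov[m Xm]|M]; first by exists (pickle m); rewrite /a' /b' pickleK_inv.
rewrite -(big_mkord xpredT (fun m => box_vol (a' m) (b' m))) /index_iota subn0.
have -> : \sum_(m <- iota 0 M) box_vol (a' m) (b' m)
        = \sum_(i <- pmap pickle_inv (iota 0 M)) box_vol (a i) (b i).
  elim: (iota 0 M) => [|m s IH]; first by rewrite !big_nil.
  rewrite big_cons /= /a' /b'; case: pickle_inv => [i|] /=.
    by rewrite big_cons IH.
  by rewrite box_vol_id add0r.
by apply/vol/(pmap_uniq (@pickle_invK I))/iota_uniq.
Qed.

Lemma lebesgue_null_sub N N' :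
  (forall X, N X -> N' X) -> lebesgue_null N' -> lebesgue_null N.
Proof.
move=> NN' N'null eps eps_gt0; have [a [b [ab [cov vol]]]] := N'null eps eps_gt0.
by exists a, b; split=> //; split=> // X /NN'/cov.
Qed.

Lemma lebesgue_null0 : lebesgue_null (fun _ : 'M[R]_(d, n) => False).
Proof.
move=> eps eps_gt0; exists (fun _ => 0), (fun _ => 0); split=> //; split=> // M.
by rewrite big1 ?ltW // => m _; rewrite box_vol_id.
Qed.

Lemma lebesgue_null_bigcup (I : countType) (N : I -> 'M[R]_(d, n) -> Prop) :
  (forall i, lebesgue_null (N i)) -> lebesgue_null (fun X => exists i, N i X).
Proof.
move=> Nnull; apply: lebesgue_null_countable => eps eps_gt0; exists (I * nat)%type.
pose e (i : I) : R := eps / 2 ^+ (pickle i).+1.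
have [ab cov] : {ab : I -> (nat -> 'M[R]_(d, n)) * (nat -> 'M[R]_(d, n)) &
    forall i, box_cover (N i) (e i) (ab i).1 (ab i).2}.
  apply: (choice (P := fun i ab => box_cover (N i) (e i) ab.1 ab.2)) => i.
  have e_gt0 : 0 < e i by rewrite divr_gt0 ?exprn_gt0.
  by have [a [b abi]] := lebesgue_null_uniq (Nnull i) e_gt0; exists (a, b).
exists (fun p => (ab p.1).1 p.2), (fun p => (ab p.1).2 p.2); split.
- by move=> [i m]; have [le_ab _ _] := cov i.
- by move=> X [i NX]; have [_ /(_ X NX)[m Xm] _] := cov i; exists (i, m).
move=> s us; pose I0 := undup (map fst s); pose M0 := undup (map snd s).
apply: (@le_trans _ _ (\sum_(p <- [seq (i, m) | i <- I0, m <- M0])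
                         box_vol ((ab p.1).1 p.2) ((ab p.1).2 p.2))).
  apply: ler_sum_uniq_sub => //.
  - by rewrite allpairs_uniq ?undup_uniq // => -[? ?] [? ?] _ _ [-> ->].
  - move=> [i m] sp; apply/allpairsP; exists (i, m).
    by rewrite !mem_undup; split=> //; apply/mapP; exists (i, m).
  - by move=> [i m]; have [le_ab _ _] := cov i; apply: box_vol_ge0.
rewrite big_allpairs /=; apply: (@le_trans _ _ (\sum_(i <- I0) e i)).
  by apply: ler_sum => i _; have [_ _ ->] := cov i; rewrite ?undup_uniq.
rewrite -mulr_sumr ler_piMr ?(ltW eps_gt0) //.
rewrite -(big_map pickle xpredT (fun u => ((2 : R) ^+ u.+1)^-1)).
apply/sum_uniq_inv_pow2_le1; rewrite map_inj_uniq ?undup_uniq //.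
exact: pcan_inj (@pickleK I).
Qed.

Lemma lebesgue_nullU N N' :
  lebesgue_null N -> lebesgue_null N' -> lebesgue_null (fun X => N X \/ N' X).
Proof.
move=> Nnull N'null.
apply: (@lebesgue_null_sub _ (fun X => exists b : bool, (if b then N else N') X)).
  by move=> X [NX|N'X]; [exists true | exists false].
by apply: lebesgue_null_bigcup => -[].
Qed.

End NullSets.

Lemma grid_cell (R : realType) (rho m : nat) (x : R) : (0 < m)%N ->
  `|x| <= rho%:R ->
  exists l : 'I_(2 * rho * m).+1,
    - rho%:R + l%:R / m%:R <= x <= - rho%:R + l%:R / m%:R + m%:R^-1.
Proof.
move=> m_gt0; rewrite ler_norml => /andP[xlo xhi].
have m_pos : 0 < m%:R :> R by rewrite ltr0n.
set u := (x + rho%:R) * m%:R.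
have u_ge0 : 0 <= u by rewrite mulr_ge0 ?ler0n //; lra.
have /andP[lo hi] := truncn_itv u_ge0.
have tL : (Num.trunc u < (2 * rho * m).+1)%N.
  rewrite ltnS -(ler_nat R); apply: le_trans lo _.
  by rewrite !natrM ler_pM2r // mulr_natl mulr2n lerD.
exists (Ordinal tL) => /=.
have t_gt0 : 0 < m%:R^-1 :> R by rewrite invr_gt0.
have ux : x = u / m%:R - rho%:R by rewrite mulrK ?unitf_gt0 // addrK.
have ul : (Num.trunc u)%:R / m%:R <= u / m%:R by rewrite ler_pM2r.
have lu : u / m%:R <= ((Num.trunc u)%:R + 1) / m%:R by rewrite ler_pM2r // natr1 ltW.
rewrite mulrDl mul1r in lu; rewrite ux; apply/andP; split; lra.
Qed.

Lemma sum_ffun_prod_pinned (R : comPzSemiRingType) (I J : finType) (e : I) (j0 : J)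
    (a s : R) :
  \sum_(q : {ffun I -> J}) \prod_p (if p == e then (q p == j0)%:R * a else s)
  = a * (#|J|%:R * s) ^+ #|I|.-1.
Proof.
rewrite -(bigA_distr_bigA (fun p j => if p == e then (j == j0)%:R * a else s)) /=.
rewrite (bigD1 e) //= eqxx.
rewrite (bigD1 j0) //= big1 ?addr0 ?eqxx ?mul1r; last first.
  by move=> j /negbTE ->; rewrite mul0r.
congr (_ * _); rewrite (eq_bigr (fun=> #|J|%:R * s)); last first.
  by move=> p /negbTE ->; rewrite sumr_const mulr_natl.
by rewrite prodr_const cardC1.
Qed.

Section LipschitzGraph.
Variables (R : realType) (d n : nat).
Implicit Types (N : 'M[R]_(d, n) -> Prop) (X Y : 'M[R]_(d, n)).

Definition entry_bounded (rho : nat) X := forall i j, `|X i j| <= rho%:R.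

Definition close_off (e : 'I_d * 'I_n) (h : R) X Y :=
  forall p, p != e -> `|X p.1 p.2 - Y p.1 p.2| <= h.

Section GraphCells.
Variables (e : 'I_d * 'I_n) (rho m : nat).
Local Notation cell := {ffun 'I_d * 'I_n -> 'I_(2 * rho * m).+1}.

Definition cell_lo (q : cell) p : R := - rho%:R + (q p)%:R / m%:R.

Definition in_cell (q : cell) X :=
  forall p, p != e -> cell_lo q p <= X p.1 p.2 <= cell_lo q p + m%:R^-1.

(* Only the cells with [q e = ord0] get a non-degenerate box, so that each
   column of cells in the direction [e] is counted once. *)
Definition cell_box_lo Y (delta : R) (q : cell) : 'M[R]_(d, n) := \matrix_(i, j)
  if (i, j) == e then Y i j - (q (i, j) == ord0)%:R * delta else cell_lo q (i, j).

Definition cell_box_hi Y (delta : R) (q : cell) : 'M[R]_(d, n) := \matrix_(i, j)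
  if (i, j) == e then Y i j + (q (i, j) == ord0)%:R * delta
  else cell_lo q (i, j) + m%:R^-1.

Lemma cell_box_lo_le Y delta q i j :
  0 <= delta -> cell_box_lo Y delta q i j <= cell_box_hi Y delta q i j.
Proof.
move=> delta_ge0; rewrite !mxE; case: ifP => _; last by rewrite lerDl invr_ge0.
have : 0 <= (q (i, j) == ord0)%:R * delta by rewrite mulr_ge0.
lra.
Qed.

Lemma in_cell_exists X : (0 < m)%N -> entry_bounded rho X ->
  exists q : cell, q e = ord0 /\ in_cell q X.
Proof.
move=> m_gt0 Xbd; have [l lP] : {l : 'I_d * 'I_n -> 'I_(2 * rho * m).+1 & forall p,
    - rho%:R + (l p)%:R / m%:R <= X p.1 p.2 <= - rho%:R + (l p)%:R / m%:R + m%:R^-1}.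
  apply: (choice (P := fun p (l : 'I_(2 * rho * m).+1) =>
    - rho%:R + l%:R / m%:R <= X p.1 p.2 <= - rho%:R + l%:R / m%:R + m%:R^-1)) => p.
  exact: grid_cell m_gt0 (Xbd p.1 p.2).
exists [ffun p => if p == e then ord0 else l p]; rewrite ffunE eqxx.
by split=> // p pe; rewrite /cell_lo ffunE (negbTE pe); apply: lP.
Qed.

Lemma in_cell_close q X Y : in_cell q X -> in_cell q Y -> close_off e m%:R^-1 X Y.
Proof.
move=> Xq Yq p pe; have /andP[? ?] := Xq p pe; have /andP[? ?] := Yq p pe.
by rewrite ler_norml; apply/andP; split; lra.
Qed.

Lemma sum_cell_box_vol (Y : cell -> 'M[R]_(d, n)) delta :
  \sum_(q : cell) box_vol (cell_box_lo (Y q) delta q) (cell_box_hi (Y q) delta q)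
  = 2 * delta * ((2 * rho * m).+1%:R / m%:R) ^+ (d * n).-1.
Proof.
rewrite (eq_bigr (fun q : cell => \prod_p
    (if p == e then (q p == ord0)%:R * (2 * delta) else m%:R^-1))); last first.
  move=> q _; rewrite /box_vol pair_bigA; apply: eq_bigr => -[i j] _.
  by rewrite !mxE; case: ifP => _; [ring | rewrite addrAC subrr add0r].
by rewrite sum_ffun_prod_pinned card_ord card_prod !card_ord.
Qed.

Lemma cell_width_le : (0 < m)%N -> (2 * rho * m).+1%:R / m%:R <= 2 * rho%:R + 1 :> R.
Proof.
move=> m_gt0; have m_pos : 0 < m%:R :> R by rewrite ltr0n.
rewrite -addn1 natrD !natrM mulrDl -mulrA mulfV ?gt_eqF // mulr1 mul1r.
by rewrite lerD2l invr_le1 ?unitf_gt0 // ler1n.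
Qed.

End GraphCells.

Hypotheses (d_gt0 : (0 < d)%N) (n_gt0 : (0 < n)%N).

Lemma lipschitz_graph_null e N (rho : nat) (C : R) : 0 <= C ->
  (forall X, N X -> entry_bounded rho X) ->
  (forall X Y h, N X -> N Y -> 0 <= h -> close_off e h X Y ->
     `|X e.1 e.2 - Y e.1 e.2| <= C * h) ->
  lebesgue_null N.
Proof.
move=> C_ge0 Nbd Nlip; apply: (lebesgue_null_countable d_gt0 n_gt0) => eps eps_gt0.
(* with cells of side [1 / m], [V / m] bounds the total volume of the cover *)
pose V : R := 2 * C * (2 * rho%:R + 1) ^+ (d * n).
have V_ge0 : 0 <= V by rewrite !mulr_ge0 ?exprn_ge0 ?addr_ge0 ?mulr_ge0.
pose m := (Num.Def.archi_bound (V / eps)).+1; pose h : R := m%:R^-1.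
have m_gt0 : (0 < m)%N by [].
have h_gt0 : 0 < h by rewrite invr_gt0 ltr0n.
have Vh : V * h <= eps.
  rewrite ler_pdivrMr ?ltr0n //; apply: ltW; rewrite -ltr_pdivrMl // mulrC.
  apply: lt_le_trans (archi_boundP _) _; first exact: divr_ge0 V_ge0 (ltW eps_gt0).
  by rewrite ler_nat leqnSn.
pose cell := {ffun 'I_d * 'I_n -> 'I_(2 * rho * m).+1}.
have [Y Yin] : {Y : cell -> 'M[R]_(d, n) & forall q,
    (exists X, N X /\ in_cell e q X) -> N (Y q) /\ in_cell e q (Y q)}.
  apply: (choice (P := fun q Y =>
    (exists X, N X /\ in_cell e q X) -> N Y /\ in_cell e q Y)) => q.
  by case: (pselect (exists X, N X /\ in_cell e q X)) => [[X XP]|nX]; [exists X | exists 0].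
pose a q := cell_box_lo e (Y q) (C * h) q; pose b q := cell_box_hi e (Y q) (C * h) q.
have ab q i j : a q i j <= b q i j by apply: cell_box_lo_le; rewrite mulr_ge0 // ltW.
exists cell, a, b; split=> // [X NX|s us].
  have [q [qe Xq]] := in_cell_exists e m_gt0 (Nbd X NX).
  have [NY Yq] := Yin q (ex_intro _ X (conj NX Xq)).
  exists q => i j; rewrite !mxE; case: eqP => [ije | /eqP ije]; last first.
    by have /andP[] := Xq (i, j) ije.
  have := Nlip X (Y q) h NX NY (ltW h_gt0) (in_cell_close Xq Yq); subst e.
  by rewrite qe eqxx mul1r ler_norml => /andP[? ?]; split; lra.
apply: le_trans (ler_sum_uniq_sub _ (enum_uniq cell) _ _) _ => //.
- by move=> q _; rewrite mem_enum.
- by move=> q; apply: box_vol_ge0.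
rewrite big_enum /= sum_cell_box_vol; apply: le_trans Vh.
rewrite /V [leRHS]mulrAC mulrA; apply: ler_wpM2l; first by rewrite !mulr_ge0 // ltW.
apply: (@le_trans _ _ ((2 * rho%:R + 1) ^+ (d * n).-1)).
  apply/lerXn2r/cell_width_le; rewrite // nnegrE ?divr_ge0 //.
  by have := ler0n R rho; lra.
apply: ler_weXn2l (leq_pred _); have := ler0n R rho; lra.
Qed.

End LipschitzGraph.

Section DetLipschitz.
Variable R : realDomainType.

Lemma normr_prod_le (I : finType) (a : I -> R) (r : R) :
  0 <= r -> (forall i, `|a i| <= r) -> `|\prod_i a i| <= r ^+ #|I|.
Proof.
move=> r_ge0 ar; rewrite normr_prod (_ : r ^+ #|I| = \prod_(i : I) r).
  by apply: ler_prod => i _; rewrite normr_ge0 ar.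
by rewrite prodr_const.
Qed.

Lemma normr_prodB_le s (a b : 'I_s -> R) (r h : R) :
  1 <= r -> (forall i, `|a i| <= r) -> (forall i, `|b i| <= r) ->
  (forall i, `|a i - b i| <= h) ->
  `|\prod_i a i - \prod_i b i| <= s%:R * r ^+ s * h.
Proof.
elim: s a b => [|s IH] a b r_ge1 ar br abh; first by rewrite !big_ord0 subrr normr0 !mul0r.
have r_ge0 : 0 <= r := le_trans ler01 r_ge1.
have h_ge0 : 0 <= h := le_trans (normr_ge0 _) (abh ord0).
rewrite !big_ord_recr /=; set A := \prod_(i < s) _; set B := \prod_(i < s) _.
have Ar : `|A| <= r ^+ s by rewrite -[s in r ^+ s]card_ord normr_prod_le.
have ABh : `|A - B| <= s%:R * r ^+ s * h by apply: IH.
have bound : `|A * (a ord_max - b ord_max) + (A - B) * b ord_max|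
    <= r ^+ s * h + s%:R * r ^+ s * h * r.
  apply: le_trans (ler_normD _ _) _; rewrite !normrM.
  by apply: lerD; apply: ler_pM.
have -> : A * a ord_max - B * b ord_max
    = A * (a ord_max - b ord_max) + (A - B) * b ord_max by ring.
apply: le_trans bound _; rewrite exprSr -addn1 natrD.
have : r ^+ s * h <= r ^+ s * h * r by rewrite ler_peMr ?mulr_ge0 ?exprn_ge0.
nra.
Qed.
End DetLipschitz.

Lemma normr_detB_le (R : realType) s (P Q : 'M[R]_s) (r h : R) :
  1 <= r -> (forall i j, `|P i j| <= r) -> (forall i j, `|Q i j| <= r) ->
  (forall i j, `|P i j - Q i j| <= h) ->
  `|\det P - \det Q| <= s`!%:R * (s%:R * r ^+ s * h).
Proof.
move=> r_ge1 Pr Qr PQh; rewrite /determinant -sumrB.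
apply: le_trans (ler_norm_sum _ _ _) _.
rewrite -card_Sn mulr_natl -sumr_const; apply: ler_sum => sg _.
by rewrite -mulrBr normrM normr_sign mul1r normr_prodB_le.
Qed.

Section Minors.
Variables (R : realType) (d n : nat).
Hypotheses (d_gt0 : (0 < d)%N) (n_gt0 : (0 < n)%N).
Implicit Types (X Y : 'M[R]_(d, n)) (e : 'I_d * 'I_n).

Definition zero_at e X : 'M[R]_(d, n) := \matrix_(i, j) if (i, j) == e then 0 else X i j.

Lemma mxsub_zero_at s (r : 'I_s -> 'I_d) (c : 'I_s -> 'I_n) e X :
  (forall i j, (r i, c j) != e) -> mxsub r c (zero_at e X) = mxsub r c X.
Proof. by move=> rce; apply/matrixP => i j; rewrite !mxE (negbTE (rce i j)). Qed.

Lemma det_mxsub_expand s (r : 'I_s.+1 -> 'I_d) (c : 'I_s.+1 -> 'I_n) X :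
  injective r -> injective c ->
  \det (mxsub r c X) = \det (mxsub r c (zero_at (r ord_max, c ord_max) X))
    + X (r ord_max) (c ord_max) * \det (mxsub (r \o lift ord_max) (c \o lift ord_max) X).
Proof.
move=> r_inj c_inj; set X0 := zero_at _ X.
have cof j : cofactor (mxsub r c X) ord_max j = cofactor (mxsub r c X0) ord_max j.
  rewrite /cofactor; congr (_ * \det _); apply/matrixP => i k; rewrite !mxE.
  by case: eqP => // -[/r_inj/eqP]; rewrite eq_sym (negbTE (neq_lift _ _)).
rewrite !(expand_det_row _ ord_max) (bigD1 ord_max) //= [X in _ = X + _](bigD1 ord_max) //=.
have -> : mxsub r c X0 ord_max ord_max = 0 by rewrite !mxE eqxx.
rewrite mul0r add0r addrC; congr (_ + _).
  apply: eq_bigr => j jmax; rewrite cof !mxE; case: eqP => // -[/c_inj jm].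
  by rewrite jm eqxx in jmax.
rewrite mxE; congr (_ * _); rewrite /cofactor -signr_odd oddD addbb mul1r.
by congr (\det _); apply/matrixP => i k; rewrite !mxE.
Qed.

Definition lipschitz_off e (F : 'M[R]_(d, n) -> R) := forall rho : nat,
  exists2 K, 0 <= K & forall X Y h, 0 <= h -> entry_bounded rho X ->
    entry_bounded rho Y -> close_off e h X Y -> `|F X - F Y| <= K * h.

Lemma lipschitz_off_det_zero_at e s (r : 'I_s -> 'I_d) (c : 'I_s -> 'I_n) :
  lipschitz_off e (fun X => \det (mxsub r c (zero_at e X))).
Proof.
move=> rho; have rho_ge1 : 1 <= rho.+1%:R :> R by rewrite ler1n.
exists (s`!%:R * (s%:R * rho.+1%:R ^+ s)); first by rewrite !mulr_ge0 ?exprn_ge0 ?ler0n.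
move=> X Y h h_ge0 Xbd Ybd XYh; rewrite -mulrA.
apply: normr_detB_le => // [i j|i j|i j]; rewrite !mxE; case: ifP => [_|/negbT rce].
- by rewrite normr0 ler0n.
- by apply: le_trans (Xbd _ _) _; rewrite ler_nat.
- by rewrite normr0 ler0n.
- by apply: le_trans (Ybd _ _) _; rewrite ler_nat.
- by rewrite subrr normr0.
- exact: XYh (r i, c j) rce.
Qed.

Lemma entry_bounded_exists X : exists rho, entry_bounded rho X.
Proof.
pose S := \sum_i \sum_j `|X i j|.
have S_ge0 : 0 <= S by rewrite !sumr_ge0 // => i _; rewrite sumr_ge0.
exists (Num.Def.archi_bound S) => i j; apply: le_trans (ltW (archi_boundP S_ge0)).
rewrite /S (bigD1 i) //= (bigD1 j) //= -addrA lerDl addr_ge0 ?sumr_ge0 //.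
by move=> k _; rewrite sumr_ge0.
Qed.

Lemma entry_bounded_le rho rho' X :
  (rho <= rho')%N -> entry_bounded rho X -> entry_bounded rho' X.
Proof. by move=> le_rho Xbd i j; apply: le_trans (Xbd i j) _; rewrite ler_nat. Qed.

Lemma lebesgue_null_affine e (A B : 'M[R]_(d, n) -> R) :
  lipschitz_off e A -> lipschitz_off e B -> lebesgue_null (fun X => A X = 0) ->
  lebesgue_null (fun X => A X * X e.1 e.2 + B X = 0).
Proof.
move=> A_lip B_lip A0_null.
pose G rho X := [/\ entry_bounded rho X, 1 <= rho%:R * `|A X| &
                    A X * X e.1 e.2 + B X = 0].
apply: (lebesgue_null_sub (N' := fun X => A X = 0 \/ exists rho, G rho X)).
  move=> X XAB; have [A0|A_neq0] := eqVneq (A X) 0; [by left | right].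
  have [rho1 Xbd] := entry_bounded_exists X.
  have AX_gt0 : 0 < `|A X| by rewrite normr_gt0.
  pose rho2 := Num.Def.archi_bound `|A X|^-1.
  have rho2A : 1 <= rho2%:R * `|A X|.
    by rewrite -ler_pdivrMr // mul1r ltW // archi_boundP // invr_ge0 ltW.
  exists (maxn rho1 rho2); split => //; first exact: entry_bounded_le (leq_maxl _ _) Xbd.
  by apply: le_trans rho2A _; rewrite ler_wpM2r ?ler_nat ?leq_maxr.
apply: (lebesgue_nullU d_gt0 n_gt0 A0_null); apply: (lebesgue_null_bigcup d_gt0 n_gt0) => rho.
have [K1 K1_ge0 AK] := A_lip rho; have [K2 K2_ge0 BK] := B_lip rho.
apply: (lipschitz_graph_null d_gt0 n_gt0 (e := e) (rho := rho)
  (C := rho%:R * (K2 + K1 * rho%:R))) => //.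
- by rewrite mulr_ge0 ?addr_ge0 ?mulr_ge0.
- by move=> X [].
move=> X Y h [Xbd XA XAB] [Ybd _ YAB] h_ge0 XYh.
have key : A X * (X e.1 e.2 - Y e.1 e.2) = B Y - B X + (A Y - A X) * Y e.1 e.2.
  by rewrite mulrBr mulrBl; lra.
have : `|A X| * `|X e.1 e.2 - Y e.1 e.2| <= K2 * h + K1 * h * rho%:R.
  rewrite -normrM key; apply: le_trans (ler_normD _ _) _; rewrite normrM.
  apply: lerD; first by rewrite distrC; apply: BK.
  by apply: ler_pM; rewrite ?normr_ge0 // distrC; apply: AK.
move=> AXY; apply: (@le_trans _ _ (rho%:R * `|A X| * `|X e.1 e.2 - Y e.1 e.2|)).
  by rewrite ler_peMl.
rewrite -mulrA (_ : _ * h = rho%:R * (K2 * h + K1 * h * rho%:R)); last by ring.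
exact: ler_wpM2l.
Qed.

Lemma det_mxsub_eq0_null s (r : 'I_s -> 'I_d) (c : 'I_s -> 'I_n) :
  injective r -> injective c -> lebesgue_null (fun X => \det (mxsub r c X) = 0).
Proof.
elim: s r c => [|s IH] r c r_inj c_inj.
  apply: (lebesgue_null_sub (N' := fun _ => False)); last exact: lebesgue_null0.
  by move=> X; rewrite det_mx00 => /eqP; rewrite oner_eq0.
pose e := (r ord_max, c ord_max); pose r' := r \o lift ord_max; pose c' := c \o lift ord_max.
have r'_inj : injective r' := inj_comp r_inj lift_inj.
have c'_inj : injective c' := inj_comp c_inj lift_inj.
have r'c'e i j : (r' i, c' j) != e.
  by apply/eqP => -[/r_inj/eqP]; rewrite eq_sym (negbTE (neq_lift _ _)).
apply: (lebesgue_null_sub (N' := fun X => \det (mxsub r' c' (zero_at e X)) * X e.1 e.2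
                                        + \det (mxsub r c (zero_at e X)) = 0)).
  by move=> X; rewrite det_mxsub_expand // -(mxsub_zero_at X r'c'e) addrC mulrC.
apply: lebesgue_null_affine; try exact: lipschitz_off_det_zero_at.
by apply: lebesgue_null_sub (IH _ _ r'_inj c'_inj) => X; rewrite mxsub_zero_at.
Qed.

Definition generic X := forall s (r : 'I_s -> 'I_d) (c : 'I_s -> 'I_n),
  injective r -> injective c -> \det (mxsub r c X) != 0.

Lemma not_generic_null : lebesgue_null (fun X => ~ generic X).
Proof.
apply: (lebesgue_null_sub (N' := fun X => exists s, exists rc :
    {ffun 'I_s -> 'I_d} * {ffun 'I_s -> 'I_n},
    [/\ injective rc.1, injective rc.2 & \det (mxsub rc.1 rc.2 X) = 0])).
  move=> X Xng; apply: contrapT => none; apply: Xng => s r c r_inj c_inj.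
  apply/eqP => det0; apply: none; exists s, ([ffun i => r i], [ffun j => c j]).
  split=> [i k|j k|] /=; rewrite ?ffunE; [exact: r_inj | exact: c_inj |].
  by rewrite -det0; congr (\det _); apply/matrixP => i j; rewrite !mxE !ffunE.
apply: (lebesgue_null_bigcup d_gt0 n_gt0) => s.
apply: (lebesgue_null_bigcup d_gt0 n_gt0) => -[r c] /=.
have [[r_inj c_inj]|not_inj] := pselect (injective r /\ injective c).
  by apply: lebesgue_null_sub (det_mxsub_eq0_null r_inj c_inj) => X [].
apply: (lebesgue_null_sub _ (lebesgue_null0 (R := R) d_gt0 n_gt0)) => X [r_inj c_inj _].
exact: not_inj.
Qed.

End Minors.

Section LeakyReLU.
Variables (R : realType) (alpha : R).
Hypothesis alpha_lt1 : alpha < 1.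

Lemma leaky_relu_pos u : 0 < u -> leaky_relu alpha u = u.
Proof. by move=> u_gt0; apply/max_idPr; rewrite ger_pMl // ltW. Qed.

Lemma leaky_relu_neg u : u < 0 -> leaky_relu alpha u = alpha * u.
Proof. by move=> u_lt0; apply/max_idPl; rewrite ler_nMl // ltW. Qed.

Lemma leaky_reluD_small a b : a != 0 -> `|b| < `|a| ->
  leaky_relu alpha (a + b) - leaky_relu alpha a = (if 0 < a then 1 else alpha) * b.
Proof.
move=> a_neq0; rewrite ltr_norml => /andP[lo hi].
have [a_gt0|a_le0] := ltP 0 a.
  rewrite gtr0_norm // in lo hi.
  by rewrite !leaky_relu_pos //; [ring | lra].
have a_lt0 : a < 0 by rewrite lt_neqAle a_neq0.
rewrite ltr0_norm // in lo hi.
by rewrite !leaky_relu_neg //; [ring | lra].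
Qed.

End LeakyReLU.

Lemma pm_vec_mul_sigma (R : realType) (alpha v : R) d n k (w : nat -> 'rV[R]_d)
    (X : 'M[R]_(d, n)) j :
  (pm_vec k v *m sigma_mx alpha ((\matrix_(i < 2 * k) w i) *m X)) 0 j
  = v * \sum_(g < k) (leaky_relu alpha ((w g *m X) 0 j)
                      - leaky_relu alpha ((w (g + k)%N *m X) 0 j)).
Proof.
pose F i := (if (i < k)%N then v else - v) * leaky_relu alpha ((w i *m X) 0 j).
rewrite mxE (eq_bigr (fun i : 'I_(2 * k) => F i)); last first.
  move=> i _; rewrite /F !mxE; congr (_ * leaky_relu _ _).
  by apply: eq_bigr => l _; rewrite !mxE.
rewrite -(big_mkord xpredT F) mul2n -addnn (@big_cat_nat _ _ _ k 0 (k + k)) ?leq_addr //=.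
rewrite -{2}[k]add0n big_addn addnK -big_split mulr_sumr big_mkord.
apply: eq_bigr => g _.
by rewrite /F ltn_ord ltnNge leq_addl /= mulrBr mulNr.
Qed.

Lemma sum_piecewise_telescope (R : pzRingType) (lo hi : R) (p : nat -> R) k b :
  (b < k)%N -> p 0%N = 0 ->
  \sum_(g < k) (if (b < g)%N then hi else lo) * (p g.+1 - p g)
  = lo * p b.+1 + hi * (p k - p b.+1).
Proof.
move=> bk p0.
rewrite -(big_mkord xpredT (fun g => (if (b < g)%N then hi else lo) * (p g.+1 - p g))).
rewrite (big_cat_nat (leq0n b.+1) bk) /=.
rewrite (eq_big_nat _ _ (F2 := fun g => lo * (p g.+1 - p g))); last first.
  by move=> g /andP[_ gb]; rewrite ltnNge -ltnS gb.
rewrite [X in _ + X](eq_big_nat _ _ (F2 := fun g => hi * (p g.+1 - p g))); last first.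
  by move=> g /andP[bg _]; rewrite bg.
by rewrite -!mulr_sumr !telescope_sumr ?(ltnW bk) // p0 subr0.
Qed.

Lemma exists_dominating_scale (R : realFieldType) (I : finType) (a b : I -> R) :
  (forall i, a i != 0) -> exists2 t, 0 < t & forall i, `|b i| < t * `|a i|.
Proof.
move=> a_neq0; pose t := 1 + \sum_i `|b i| / `|a i|.
have ratio_ge0 i : 0 <= `|b i| / `|a i| by rewrite divr_ge0.
exists t => [|i]; first by rewrite ltr_pwDl ?sumr_ge0.
rewrite -ltr_pdivrMr ?normr_gt0 // /t (bigD1 i) //= addrCA ltr_pwDr //.
by rewrite ltr_pwDl // sumr_ge0.
Qed.

Lemma exists_threshold (R : realFieldType) (I : finType) (f : I -> R) (P : pred I) :
  (forall i j, P i -> ~~ P j -> f i < f j) ->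
  exists tau, forall i, if P i then f i < tau else tau < f i.
Proof.
move=> sep; pose S := \sum_i `|f i|.
have f_bd i : - S - 1 < f i < S + 1.
  have : `|f i| <= S by rewrite /S (bigD1 i) //= lerDl sumr_ge0.
  by rewrite ler_norml => /andP[? ?]; apply/andP; split; lra.
pose M := \big[Num.max/- S - 1]_(i | P i) f i.
pose m := \big[Num.min/S + 1]_(j | ~~ P j) f j.
have f_lt_m i : P i -> f i < m.
  move=> Pi; apply: lt_bigmin => [|j]; first by case/andP: (f_bd i).
  exact: sep.
have M_lt_m : M < m.
  apply: bigmax_lt f_lt_m; apply: lt_bigmin => [|j _]; last by case/andP: (f_bd j).
  have : 0 <= S by rewrite sumr_ge0.
  lra.
exists ((M + m) / 2) => i; case: ifP => Pi.
  have : f i <= M by apply: le_bigmax_cond.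
  by rewrite ltr_pdivlMr //; lra.
have : m <= f i by apply: bigmin_le_cond; rewrite Pi.
by rewrite ltr_pdivrMr //; lra.
Qed.

Lemma rank_blocks (disp : Order.disp_t) (T : orderType disp) n d k (f : 'I_n -> T) :
  (0 < d)%N -> (n <= k * d)%N -> injective f ->
  exists bl : 'I_n -> nat,
    [/\ forall j, (bl j < k)%N, forall i j, (bl i < bl j)%N -> (f i < f j)%O &
        forall b, (#|[set j | bl j == b]| <= d)%N].
Proof.
move=> d_gt0 nkd f_inj; pose rk j := #|[set l | (f l < f j)%O]|.
have rk_lt i j : (f i < f j)%O -> (rk i < rk j)%N.
  move=> fij; apply/proper_card/properP; split.
    by apply/subsetP => l; rewrite !inE => /lt_trans; apply.
  by exists i; rewrite !inE ?ltxx.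
have rk_inj : injective rk.
  move=> i j rkij; apply/eqP; apply: contraT; rewrite -(inj_eq f_inj) neq_lt.
  by case/orP=> /rk_lt; rewrite rkij ltnn.
have rk_n j : (rk j < n)%N.
  rewrite -[n in (_ < n)%N]card_ord; apply/proper_card/properP.
  by split; [apply/subsetP | exists j; rewrite !inE ?ltxx].
exists (fun j => rk j %/ d)%N; split.
- move=> j; rewrite ltn_divLR // (leq_trans (rk_n j)) //.
- move=> i j bij; case: ltgtP => // [/rk_lt/ltnW/(leq_div2r d)|/f_inj ij].
    by rewrite leqNgt bij.
  by rewrite ij ltnn in bij.
- move=> b; pose g j : 'I_d := Ordinal (ltn_pmod (rk j) d_gt0).
  have g_inj : {in [set j | rk j %/ d == b]%N &, injective g}.
    move=> i j; rewrite !inE => /eqP ib /eqP jb /(congr1 val) /= ij.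
    by apply: rk_inj; rewrite (divn_eq (rk i) d) (divn_eq (rk j) d) ib jb ij.
  by rewrite -(card_in_imset g_inj) -[X in (_ <= X)%N](card_ord d) max_card.
Qed.

Lemma det_mx2 (R : comPzRingType) (A : 'M[R]_2) : \det A = A 0 0 * A 1 1 - A 0 1 * A 1 0.
Proof.
rewrite (expand_det_row _ 0) !big_ord_recl big_ord0 /cofactor !det_mx11 !mxE /=.
have -> : lift (0 : 'I_2) (0 : 'I_1) = 1 by apply: val_inj.
have -> : lift (1 : 'I_2) (0 : 'I_1) = 0 by apply: val_inj.
by rewrite expr0 expr1 mul1r mulN1r addr0 mulrN.
Qed.

Section GenericData.
Variables (R : realType) (d n : nat) (X : 'M[R]_(d, n)).
Hypothesis X_generic : generic X.

Lemma generic_entry_neq0 i j : X i j != 0.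
Proof.
have r_inj : injective (fun _ : 'I_1 => i) by move=> a b _; rewrite !ord1.
have c_inj : injective (fun _ : 'I_1 => j) by move=> a b _; rewrite !ord1.
by have := X_generic r_inj c_inj; rewrite det_mx11 mxE.
Qed.

Lemma generic_ratio_inj i0 i1 : i0 != i1 -> injective (fun j => X i1 j / X i0 j).
Proof.
move=> i01 j k /eqP; rewrite eqr_div ?generic_entry_neq0 // => /eqP jk.
apply: contraTeq isT => kj.
have /tuple_uniqP r_inj : uniq [tuple i0; i1] by rewrite /= inE i01.
have /tuple_uniqP c_inj : uniq [tuple j; k] by rewrite /= inE kj.
have := X_generic r_inj c_inj; rewrite det_mx2 !mxE !(tnth_nth i0) !(tnth_nth j) /=.
by rewrite mulrC [X i0 k * _]mulrC jk subrr eqxx.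
Qed.

Lemma generic_interpolate (S : {set 'I_n}) (z : 'I_n -> R) : (#|S| <= d)%N ->
  exists u : 'rV[R]_d, forall j, j \in S -> (u *m X) 0 j = z j.
Proof.
move=> S_le_d; pose c (i : 'I_#|S|) := enum_val i; pose r := widen_ord S_le_d.
have r_inj : injective r by move=> i k /(congr1 val) /= /val_inj.
have M_unit : mxsub r c X \in unitmx.
  by rewrite unitmxE unitfE X_generic //; apply: enum_val_inj.
pose u := (\row_i z (c i)) *m invmx (mxsub r c X).
exists (u *m rowsub r 1%:M) => j jS; rewrite -mulmxA -rowsubE.
have -> : j = c (enum_rank_in jS j) by rewrite /c (enum_rankK_in jS).
move/rowP/(_ (enum_rank_in jS j)): (mulmxKV M_unit (\row_i z (c i))).
by rewrite !mxE => <-; apply: eq_bigr => l _; rewrite !mxE.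
Qed.

End GenericData.

Section Construction.
Variables (R : realType) (d n : nat) (X : 'M[R]_(d, n)).
Hypothesis X_generic : generic X.

Definition separating_pencil (s : 'I_n -> bool) (w : nat -> 'rV[R]_d) (bl : 'I_n -> nat) :=
  forall g j, (w g *m X) 0 j != 0 /\ (0 < (w g *m X) 0 j) = (s j == (bl j < g)%N).

Lemma generic_pencil k : (2 <= d)%N -> (n <= k * d)%N ->
  exists s w bl, [/\ forall j, (bl j < k)%N,
    forall b, (#|[set j | bl j == b]| <= d)%N & separating_pencil s w bl].
Proof.
move=> d_ge2 nkd; have d_gt0 : (0 < d)%N by apply: leq_trans d_ge2.
pose i0 : 'I_d := Ordinal d_gt0; pose i1 : 'I_d := Ordinal d_ge2.
have i01 : i0 != i1 by [].
pose ratio j := X i1 j / X i0 j.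
have [bl [bl_lt_k bl_ord bl_card]] := rank_blocks d_gt0 nkd (generic_ratio_inj X_generic i01).
have [tau tauP] : {tau : nat -> R & forall g j,
    if (bl j < g)%N then ratio j < tau g else tau g < ratio j}.
  apply: (choice (P := fun g t => forall j,
    if (bl j < g)%N then ratio j < t else t < ratio j)) => g.
  by apply: exists_threshold => i j ig; rewrite -leqNgt => gj; apply/bl_ord/(leq_trans ig).
pose w g : 'rV[R]_d := \row_l (if l == i0 then tau g else if l == i1 then -1 else 0).
have wX g j : (w g *m X) 0 j = X i0 j * (tau g - ratio j).
  rewrite mxE (bigD1 i0) //= (bigD1 i1) 1?eq_sym //= big1 => [|l /andP[l0 l1]].
    rewrite !mxE eqxx eq_sym (negbTE i01) eqxx addr0 mulrBr mulrCA divff.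
      by rewrite mulr1 mulN1r mulrC.
    exact: generic_entry_neq0.
  by rewrite mxE (negbTE l0) (negbTE l1) mul0r.
exists (fun j => 0 < X i0 j), w, bl; split=> // g j; rewrite wX.
have := tauP g j; have := generic_entry_neq0 X_generic i0 j.
case: (bl j < g)%N => x0 ineq; rewrite mulf_neq0 ?subr_eq0 ?(gt_eqF ineq) ?(lt_eqF ineq) //.
  by rewrite pmulr_lgt0 ?subr_gt0 ?eqbT.
by rewrite nmulr_lgt0 ?subr_lt0 // eqbF_neg -leNgt le_eqVlt (negbTE x0).
Qed.

Lemma pencil_network_output (alpha : R) k s w bl (P : nat -> 'rV[R]_d) :
  alpha < 1 -> (forall j, (bl j < k)%N) -> separating_pencil s w bl ->
  P 0%N = 0 ->
  exists W : 'M[R]_(2 * k, d), forall j,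
    (pm_vec k 1 *m sigma_mx alpha (W *m X)) 0 j
    = (if s j then alpha else 1) * (P (bl j).+1 *m X) 0 j
      + (if s j then 1 else alpha) * ((P k *m X) 0 j - (P (bl j).+1 *m X) 0 j).
Proof.
move=> a_lt1 bl_lt_k wP P0; pose D g := P g.+1 - P g.
have [t t_gt0 tP] := exists_dominating_scale
  (a := fun gj : 'I_k * 'I_n => (w gj.1 *m X) 0 gj.2)
  (fun gj => (D gj.1 *m X) 0 gj.2) (fun gj => (wP gj.1 gj.2).1).
pose W i := if (i < k)%N then t *: w i + D i else t *: w (i - k)%N.
exists (\matrix_(i < 2 * k) W i) => j; pose p m := (P m *m X) 0 j.
have pair (g : 'I_k) : leaky_relu alpha ((W g *m X) 0 j)
    - leaky_relu alpha ((W (g + k)%N *m X) 0 j)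
    = (if (bl j < g)%N then if s j then 1 else alpha else if s j then alpha else 1)
      * (p g.+1 - p g).
  have -> : (W g *m X) 0 j = t * (w g *m X) 0 j + (D g *m X) 0 j.
    by rewrite /W ltn_ord mulmxDl -scalemxAl [LHS]mxE [X in X + _]mxE.
  have -> : (W (g + k)%N *m X) 0 j = t * (w g *m X) 0 j.
    by rewrite /W ltnNge leq_addl addnK -scalemxAl mxE.
  have [wX_neq0 wX_sign] := wP g j.
  rewrite leaky_reluD_small //.
  - rewrite pmulr_rgt0 // wX_sign /p /D mulmxBl [X in _ * X]mxE [X in _ + X]mxE.
    by case: (s j); case: (bl j < g)%N.
  - by rewrite mulf_eq0 negb_or gt_eqF.
  - by rewrite normrM gtr0_norm //; apply: (tP (g, j)).
rewrite pm_vec_mul_sigma mul1r (eq_bigr _ (fun g _ => pair g)).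
by rewrite sum_piecewise_telescope // /p P0 mul0mx mxE.
Qed.

Lemma generic_interpolation (alpha : R) k (y : 'rV[R]_n) :
  0 < alpha -> alpha < 1 -> (2 <= d)%N -> (0 < k)%N -> (n <= k * d)%N ->
  exists (W : 'M[R]_(2 * k, d)) (v : R), 0 < v /\ y = pm_vec k v *m sigma_mx alpha (W *m X).
Proof.
move=> a_gt0 a_lt1 d_ge2 k_gt0 nkd.
have [s [w [bl [bl_lt_k bl_card wP]]]] := generic_pencil d_ge2 nkd.
pose clo j := if s j then alpha else 1; pose chi j := if s j then 1 else alpha.
have clo_neq0 j : clo j != 0 by rewrite /clo; case: (s j); rewrite ?oner_eq0 ?gt_eqF.
have chi_clo_neq0 j : chi j - clo j != 0.
  by rewrite /chi /clo subr_eq0; case: (s j); rewrite ?(lt_eqF a_lt1) // eq_sym lt_eqF.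
have [L hL] := generic_interpolate X_generic (fun j => y 0 j / clo j) (bl_card k.-1).
pose z j := (chi j * (L *m X) 0 j - y 0 j) / (chi j - clo j).
have [Q hQ] : {Q : nat -> 'rV[R]_d & forall b j, bl j = b -> (Q b *m X) 0 j = z j}.
  apply: (choice (P := fun b (u : 'rV[R]_d) => forall j, bl j = b -> (u *m X) 0 j = z j)).
  move=> b; have [u hu] := generic_interpolate X_generic z (bl_card b).
  by exists u => j jb; apply: hu; rewrite inE jb.
(* [P k = L] must fit the labels of the last block on its own *)
pose P m := if m is m'.+1 then (if m' == k.-1 then L else Q m') else 0.
have [W WP] := pencil_network_output (P := P) a_lt1 bl_lt_k wP erefl.
exists W, 1; split=> //; apply/rowP => j; rewrite WP.
have -> : P k = L by rewrite -(prednK k_gt0) /= eqxx.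
rewrite /=; case: eqVneq => [blk|blk].
- by rewrite subrr mulr0 addr0 hL ?inE ?blk // mulrC divfK.
- by rewrite hQ // /z -/(clo j) -/(chi j); field; apply: chi_clo_neq0.
Qed.

End Construction.

Lemma ceildiv_width n d k : (2 <= d)%N -> (1 <= n)%N ->
  (2 * ceildiv n (2 * d - 2) <= k)%N -> (0 < k)%N /\ (n <= k * d)%N.
Proof.
move=> d_ge2 n_ge1; rewrite /ceildiv; set b := (2 * d - 2)%N.
have b_gt0 : (0 < b)%N by rewrite /b; lia.
have := ltn_ceil (n + b.-1) b_gt0; set q := ((n + b.-1) %/ b)%N => ceil_q k_ge.
have n_le : (n <= q * b)%N by move: ceil_q; rewrite /b; nia.
by split; move: n_le; rewrite /b; nia.
Qed.

Theorem theorem5 (R : realType) (alpha : R) (d n k : nat) :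
  0 < alpha -> alpha < 1 ->
  (2 <= d)%N -> (1 <= n)%N -> (2 * ceildiv n (2 * d - 2) <= k)%N ->
  forall y : 'rV[R]_n, (forall j, y 0 j = 1 \/ y 0 j = -1) ->
  exists N : 'M[R]_(d, n) -> Prop, lebesgue_null N /\
    forall X : 'M[R]_(d, n), ~ N X ->
      exists (W : 'M[R]_(2 * k, d)) (v : R), 0 < v /\
        y = pm_vec k v *m sigma_mx alpha (W *m X).
Proof.
(* the construction interpolates arbitrary real labels, not only signs *)
move=> a_gt0 a_lt1 d_ge2 n_ge1 k_ge y _.
have [k_gt0 n_le_kd] := ceildiv_width d_ge2 n_ge1 k_ge.
exists (fun X => ~ generic X); split.
  by apply: not_generic_null; [apply: leq_trans d_ge2 | apply: n_ge1].
by move=> X /contrapT X_generic; apply: generic_interpolation.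
Qed.
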